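(* Let $G$ be a group that is abelian or locally finite, $H$ a group, and $\phi,\psi\in\mathrm{Hom}(H,G)$. Then $\phi^*\circ\tau\neq\psi^*\circ\tau$ for every non-constant $\tau\in\mathrm{CA}(A^G)$ if and only if $\Delta(\phi,\psi)$ is infinite.
   Context: $A$ is a finite set with $|A|\ge 2$. $A^G$ is the set of functions $G\to A$ with shift action $(g\cdot x)(k):=x(g^{-1}k)$. $\mathrm{CA}(A^G)$ is the set of maps $\tau:A^G\to A^G$ for which there exist finite $T\subseteq G$ and $\mu:A^T\to A$ with $\tau(x)(g)=\mu((g^{-1}\cdot x)|_T)$ for all $x,g$. $\phi^*:A^G\to A^H$, $\phi^*(x):=x\circ\phi$. $\Delta(\phi,\psi):=\{\psi(h)^{-1}\phi(h):h\in H\}$. A group is locally finite if every finitely generated subgroup is finite. *)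

(* Groups are mathcomp's (possibly infinite) [groupType]
   from boot/monoid.v; group homomorphisms are multiplicative maps. *)
From HB Require Import structures.
From mathcomp Require Import all_boot.
Set Implicit Arguments. Unset Strict Implicit. Unset Printing Implicit Defensive.
Local Open Scope group_scope.

Definition finite_set (T : eqType) (S : T -> Prop) : Prop :=
  exists s : seq T, forall t, S t -> t \in s.

Definition is_hom (H G : groupType) (f : H -> G) : Prop :=
  forall x y : H, f (x * y) = f x * f y.

Inductive generated (G : groupType) (s : seq G) : G -> Prop :=
  | gen_in : forall g, g \in s -> generated s g
  | gen_one : generated s 1
  | gen_mul : forall g h, generated s g -> generated s h -> generated s (g * h)
  | gen_inv : forall g, generated s g -> generated s (g^-1).

Definition abelian_group (G : groupType) : Prop :=
  forall x y : G, x * y = y * x.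

Definition locally_finite (G : groupType) : Prop :=
  forall s : seq G, finite_set (generated s).

Definition shift (G : groupType) (A : Type) (g : G) (x : G -> A) : G -> A :=
  fun k => x (g^-1 * k).

Definition is_CA (G : groupType) (A : Type) (tau : (G -> A) -> (G -> A)) : Prop :=
  exists (T : G -> Prop) (mu : ({t : G | T t} -> A) -> A),
    finite_set T /\
    forall (x : G -> A) (g : G),
      tau x g = mu (fun t => shift (g^-1) x (proj1_sig t)).

Definition pullback (H G : groupType) (A : Type) (phi : H -> G) (x : G -> A) : H -> A :=
  fun h => x (phi h).

Definition is_constant (X Y : Type) (f : X -> Y) : Prop :=
  exists c : Y, forall x, f x = c.

Definition Delta (H G : groupType) (phi psi : H -> G) : G -> Prop :=
  fun g => exists h : H, g = (psi h)^-1 * phi h.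

From Stdlib Require Import Classical ClassicalDescription FunctionalExtensionality.
From HB Require Import structures.
From mathcomp Require Import all_boot.
Set Implicit Arguments. Unset Strict Implicit. Unset Printing Implicit Defensive.

(* Equal pullbacks phi^* o tau = psi^* o tau mean exactly that the local rule
   mu of tau cannot distinguish a configuration from its translate by any
   d in Delta(phi, psi).
   - If Delta is infinite, some d in Delta lies outside T T^-1 (T the finite
     memory set), so T and dT are disjoint; gluing two arbitrary patterns on
     T and dT shows that mu, hence tau, is constant.
   - If Delta is finite, we find a finite set K containing 1 that is stable
     under left translation by Delta and its inverses: Delta itself when G is
     abelian (it is then the image of a homomorphism), the subgroup generated
     by Delta when G is locally finite.  The automaton "x(gK) is constantly
     a" is then non-constant and is not separated by phi^* and psi^*. *)

Local Open Scope group_scope.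

Section Homomorphisms.
Variables (H G : groupType) (f : H -> G).
Hypothesis f_hom : is_hom f.

Lemma hom1 : f 1 = 1.
Proof.
have := f_hom 1 1; rewrite mul1g => e.
by apply: (mulgI (f 1)); rewrite -e mulg1.
Qed.

Lemma homV (h : H) : f h^-1 = (f h)^-1.
Proof. by apply: (mulgI (f h)); rewrite -f_hom !mulgV hom1. Qed.

End Homomorphisms.

(* K is stable under left translation by the elements of D and their
   inverses: the set-level condition under which indicator automata built on
   K cannot tell apart translates by elements of D. *)
Definition translation_stable (G : groupType) (D K : G -> Prop) : Prop :=
  forall d k, D d -> K k -> K (d * k) /\ K (d^-1 * k).

(* The image of a homomorphism is a subgroup, hence stable under
   translation by its own elements. *)
Lemma image_translation_stable (H G : groupType) (f : H -> G) :
  is_hom f -> translation_stable (fun g => exists h, g = f h)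
                                 (fun g => exists h, g = f h).
Proof.
move=> f_hom _ _ [h ->] [h' ->]; split; first by exists (h * h').
by exists (h^-1 * h'); rewrite f_hom homV.
Qed.

(* Over an abelian group, h |-> psi(h)^-1 phi(h) is a homomorphism whose
   image is Delta(phi, psi). *)
Lemma Delta_hom_abelian (H G : groupType) (phi psi : H -> G) :
  abelian_group G -> is_hom phi -> is_hom psi ->
  is_hom (fun h => (psi h)^-1 * phi h).
Proof.
move=> ab phi_hom psi_hom h h'.
rewrite phi_hom psi_hom invgM (ab (psi h')^-1) -!mulgA; congr (_ * _).
by rewrite !mulgA (ab (phi h)).
Qed.

Lemma generated_translation_stable (G : groupType) (s : seq G) (D : G -> Prop) :
  (forall d, D d -> d \in s) -> translation_stable D (generated s).
Proof.
move=> Ds d k Dd Kk; have gd := gen_in (Ds _ Dd).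
by split; apply: gen_mul => //; apply: gen_inv.
Qed.

Lemma finite_Delta_stable_set (G H : groupType) (phi psi : H -> G) :
  abelian_group G \/ locally_finite G -> is_hom phi -> is_hom psi ->
  finite_set (Delta phi psi) ->
  exists K : G -> Prop,
    [/\ finite_set K, K 1 & translation_stable (Delta phi psi) K].
Proof.
move=> [ab | lf] phi_hom psi_hom [s Ds].
- exists (Delta phi psi); split; first by exists s.
    by exists 1; rewrite (hom1 phi_hom) (hom1 psi_hom) invg1 mulg1.
  exact: image_translation_stable (Delta_hom_abelian ab phi_hom psi_hom).
- exists (generated s); split; [exact: lf | exact: gen_one |].
  exact: generated_translation_stable.
Qed.

Lemma shiftE (G : groupType) (A : Type) (g k : G) (x : G -> A) :
  shift g^-1 x k = x (g * k).
Proof. by rewrite /shift invgK. Qed.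

Section IndicatorAutomaton.
Variables (A : Type) (G : groupType) (K : G -> Prop) (a b : A).
Hypothesis a_neq_b : a <> b.

Definition indicator_rule (y : {t : G | K t} -> A) : A :=
  if excluded_middle_informative (forall t, y t = a) then a else b.

Definition indicator_CA (x : G -> A) (g : G) : A :=
  indicator_rule (fun t => shift g^-1 x (proj1_sig t)).

Lemma indicator_CA_is_CA : finite_set K -> is_CA indicator_CA.
Proof. by move=> finK; exists K, indicator_rule. Qed.

Lemma indicator_CA_a x g :
  indicator_CA x g = a <-> (forall k, K k -> x (g * k) = a).
Proof.
rewrite /indicator_CA /indicator_rule.
case: excluded_middle_informative => [all_a | not_all_a]; split=> //.
- by move=> _ k Kk; have := all_a (exist _ k Kk); rewrite shiftE.
- by move=> e; case: a_neq_b.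
- by move=> ha; case: not_all_a => -[k Kk]; rewrite shiftE; apply: ha.
Qed.

Lemma indicator_CA_two_valued x g : indicator_CA x g = a \/ indicator_CA x g = b.
Proof. by rewrite /indicator_CA /indicator_rule; case: excluded_middle_informative; auto. Qed.

(* Being two-valued, it is determined by whether it equals a. *)
Lemma indicator_CA_ext x g x' g' :
  (indicator_CA x g = a <-> indicator_CA x' g' = a) ->
  indicator_CA x g = indicator_CA x' g'.
Proof.
move=> [to_a of_a].
case: (indicator_CA_two_valued x g) => e; first by rewrite e to_a.
case: (indicator_CA_two_valued x' g') => e'; last by rewrite e e'.
by rewrite (of_a e') e'.
Qed.

Lemma indicator_CA_nonconstant : K 1 -> ~ is_constant indicator_CA.
Proof.
move=> K1 [c const_c].
have /indicator_CA_a all_a : indicator_CA (fun _ => b) 1 = a.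
  by rewrite const_c -(const_c (fun _ => a)); apply/indicator_CA_a.
by case: a_neq_b; rewrite -(all_a 1 K1).
Qed.

Lemma indicator_CA_right_invariant x g d :
  (forall k, K k -> K (d * k) /\ K (d^-1 * k)) ->
  indicator_CA x (g * d) = indicator_CA x g.
Proof.
move=> stable; apply: indicator_CA_ext; rewrite !indicator_CA_a.
split=> ha k Kk; have [Kdk Kd'k] := stable k Kk.
- by have := ha _ Kd'k; rewrite -mulgA mulVKg.
- by rewrite -mulgA; apply: ha.
Qed.

End IndicatorAutomaton.

Lemma unseparated_CA_of_stable_set (A : Type) (G H : groupType)
    (phi psi : H -> G) (K : G -> Prop) (a b : A) :
  a <> b -> finite_set K -> K 1 -> translation_stable (Delta phi psi) K ->
  exists tau : (G -> A) -> (G -> A), [/\ is_CA tau, ~ is_constant tau &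
      (fun x => pullback phi (tau x)) = (fun x => pullback psi (tau x))].
Proof.
move=> a_neq_b finK K1 stable; exists (indicator_CA K a b); split.
- exact: indicator_CA_is_CA.
- exact: indicator_CA_nonconstant.
apply: functional_extensionality => x; apply: functional_extensionality => h.
rewrite /pullback -[phi h](mulVKg (psi h)).
by apply: indicator_CA_right_invariant => // k; apply: stable; exists h.
Qed.

Lemma infinite_escapes (T : eqType) (S : T -> Prop) (s : seq T) :
  ~ finite_set S -> exists2 t, S t & t \notin s.
Proof.
move=> infS; apply: NNPP => none; apply: infS; exists s => t St.
by apply: NNPP => /negP t_notin; apply: none; exists t.
Qed.

(* A local rule with memory T that cannot distinguish a configuration from
   its translate by some d outside T T^-1 is constant: T and dT are
   disjoint, so a configuration can agree with x on T and with y on dT. *)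
Lemma translation_invariant_rule_constant (A : Type) (G : groupType)
    (T : G -> Prop) (s : seq G) (mu : ({t : G | T t} -> A) -> A) (d : G) :
  (forall t, T t -> t \in s) -> d \notin [seq u * v^-1 | u <- s, v <- s] ->
  (forall x : G -> A, mu (fun t => x (d * proj1_sig t)) = mu (fun t => x (proj1_sig t))) ->
  forall x y : G -> A,
    mu (fun t => x (proj1_sig t)) = mu (fun t => y (proj1_sig t)).
Proof.
move=> Ts d_notin invariant x y.
pose z k := if k \in s then x k else y (d^-1 * k).
have z_on_T : (fun t : {t | T t} => z (proj1_sig t)) = (fun t => x (proj1_sig t)).
  by apply: functional_extensionality => -[t Tt]; rewrite /z /= Ts.
have z_on_dT : (fun t : {t | T t} => z (d * proj1_sig t)) = (fun t => y (proj1_sig t)).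
  apply: functional_extensionality => -[t Tt] /=; rewrite /z mulKg.
  case: ifP => // dt_in; case/negP: d_notin.
  apply/allpairsP; exists (d * t, t); split => //; first exact: Ts.
  by rewrite /= mulgK.
by rewrite -z_on_T -invariant z_on_dT.
Qed.

Lemma unseparated_CA_constant (A : Type) (G H : groupType) (phi psi : H -> G)
    (tau : (G -> A) -> (G -> A)) :
  is_CA tau -> ~ finite_set (Delta phi psi) ->
  (fun x => pullback phi (tau x)) = (fun x => pullback psi (tau x)) ->
  forall x y, tau x = tau y.
Proof.
move=> [T [mu [[s Ts] tauE]]] infDelta same_pullback.
have [_ [h ->] d_notin] := infinite_escapes [seq u * v^-1 | u <- s, v <- s] infDelta.
have invariant x : mu (fun t => x ((psi h)^-1 * phi h * proj1_sig t))
                   = mu (fun t => x (proj1_sig t)).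
  have := f_equal (fun F => F (fun k => x ((psi h)^-1 * k)) h) same_pullback.
  rewrite /pullback !tauE => e; apply: etrans (etrans e _) => {e}; congr mu;
    by apply: functional_extensionality => t; rewrite shiftE /= ?mulgA ?mulVg ?mul1g.
have rule_const := translation_invariant_rule_constant Ts d_notin invariant.
move=> x y; apply: functional_extensionality => g; rewrite !tauE.
have shifted z : (fun t : {t | T t} => shift g^-1 z (proj1_sig t))
                 = (fun t => (fun k => z (g * k)) (proj1_sig t)).
  by apply: functional_extensionality => t; rewrite shiftE.
by rewrite !shifted; exact: (rule_const (fun k => x (g * k)) (fun k => y (g * k))).
Qed.

Theorem proposition3p14 (A : finType) (G H : groupType) (phi psi : H -> G) :
  1 < #|A| ->
  abelian_group G \/ locally_finite G ->
  is_hom phi -> is_hom psi ->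
  ((forall tau : (G -> A) -> (G -> A), is_CA tau -> ~ is_constant tau ->
      (fun x => pullback phi (tau x)) <> (fun x => pullback psi (tau x)))
   <-> ~ finite_set (Delta phi psi)).
Proof.
move=> /card_gt1P [a [b [_ _ /eqP a_neq_b]]] hG phi_hom psi_hom; split.
- move=> separated finDelta.
  have [K [finK K1 stable]] := finite_Delta_stable_set hG phi_hom psi_hom finDelta.
  have [tau [tau_CA tau_nc same]] := unseparated_CA_of_stable_set a_neq_b finK K1 stable.
  exact: separated tau tau_CA tau_nc same.
- move=> infDelta tau tau_CA tau_nc same.
  apply: tau_nc; exists (tau (fun _ => a)) => x.
  exact: unseparated_CA_constant tau_CA infDelta same x _.
Qed.
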